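(* Let $A\in\mathbb{R}^{n\times n}$ be nonsingular, $B\in\mathbb{R}^{n\times p}$, $C\in\mathbb{R}^{q\times n}$, and $X_0=O$. For $k=0,1,2,\dots$ suppose $A-X_kBB^T$ is nonsingular, let $\widetilde X_{k+1}=W_{k+1}\widetilde Y^{(k+1)}W_{k+1}^T$ be an approximate solution computed by EKSM of $$(A-X_kBB^T)X+X(A-X_kBB^T)^T=-X_kBB^TX_k-C^TC,$$ where the columns of $W_{k+1}$ form an orthonormal basis of $\mathbf{EK}^\square_{m_{k+1}}(A-X_kBB^T,[C^T,X_kB])$, set $Z_k=\widetilde X_{k+1}-X_k$, and define $X_{k+1}=X_k+\lambda_kZ_k$ for some step size $\lambda_k>0$. Then for every $k\ge0$, $$\mathrm{Range}(X_{k+1})\subseteq\mathbf{EK}^\square_{\bar m_{k+1}}(A,C^T)$$ for some integer $\bar m_{k+1}\le\sum_{j=1}^{k+1}m_j+2$; in particular, whenever $X_{k+1}=P_{k+1}P_{k+1}^T$ is a low-rank factorization, $\mathrm{Range}(P_{k+1})\subseteq \mathbf{EK}^\square_{\bar m_{k+1}}(A,C^T)$.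
   Context: For a nonsingular $M\in\mathbb{R}^{n\times n}$ and $G\in\mathbb{R}^{n\times s}$, the block extended Krylov subspace is $\mathbf{EK}^\square_m(M,G)=\mathrm{Range}([G,M^{-1}G,MG,M^{-2}G,\dots,M^{m-1}G,M^{-m}G])$. ''Solving the Lyapunov equation $MX+XM^T+GG^T=0$ by EKSM'' means computing an approximate solution of the form $VYV^T$, where the columns of $V$ form an orthonormal basis of $\mathbf{EK}^\square_m(M,G)$ for some $m$ and $Y$ is a small square matrix. *)

From HB Require Import structures.
From mathcomp Require Import all_boot all_order all_algebra.
Set Implicit Arguments. Unset Strict Implicit. Unset Printing Implicit Defensive.
Import Order.TTheory GRing.Theory Num.Theory.
Local Open Scope ring_scope.

(* Column space ("Range") of a matrix M : 'M_(n, s) is represented as the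
   row space of M^T.  The block extended Krylov subspace
   EK_m(M, G) = Range [G, M^-1 G, M G, M^-2 G, ..., M^(m-1) G, M^-m G]
   is represented by a square matrix whose row space is the sum of the row
   spaces of (M^i G)^T, i < m, and (M^-(i+1) G)^T, i < m. *)
Definition EK (R : fieldType) (n s : nat) (M : 'M[R]_n) (G : 'M[R]_(n, s))
    (m : nat) : 'M[R]_n :=
  ((\sum_(i < m) <<(M ^+ i *m G)^T>>) +
   (\sum_(i < m) <<(invmx M ^+ i.+1 *m G)^T>>))%MS.

Definition range_sub (R : fieldType) (n s : nat) (P : 'M[R]_(n, s))
    (S : 'M[R]_n) : bool := (P^T <= S)%MS.

Definition range_eq (R : fieldType) (n s : nat) (P : 'M[R]_(n, s))
    (S : 'M[R]_n) : bool := (P^T == S)%MS.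

Definition orthonormal_cols (R : ringType) (n r : nat) (W : 'M[R]_(n, r)) :
  Prop := W^T *m W = 1%:M.

From HB Require Import structures.
From mathcomp Require Import all_boot all_order all_algebra.
Set Implicit Arguments. Unset Strict Implicit. Unset Printing Implicit Defensive.
Import Order.TTheory GRing.Theory Num.Theory.
Local Open Scope ring_scope.

(* Write EK_j for the block extended Krylov space EK_j(A, C^T).
   Multiplication by A or by A^{-1} raises the Krylov level by at most one.
   If Range(X) lies in EK_a, the same holds, on levels j >= a, for the
   shifted operator N = A - X B B^T (since N Z = A Z - X (B B^T Z)) and for
   its inverse (since N w = Z gives w = A^{-1} (Z + X (B B^T w))).  Hence
   an extended Krylov space EK_m(N, H) whose starting block H lies in EK_b
   is contained in EK_{b+m}.  Applied to the k-th EKSM step, with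
   H = [C^T, X_k B], this shows that the basis W_{k+1}, and therefore the
   update X_{k+1} = (1 - lambda_k) X_k + lambda_k W_{k+1} Y W_{k+1}^T,
   raises the level by m_{k+1}; by induction X_{k+1} lies in level
   1 + m_1 + ... + m_{k+1}.  Finally, over an ordered field
   Range(P P^T) = Range(P), which gives the statement on factorizations. *)

Section RangeSub.
Variables (R : fieldType) (n : nat).
Implicit Types (S T : 'M[R]_n).

Lemma range_sub_trans s (Z : 'M[R]_(n, s)) S T :
  range_sub Z S -> (S <= T)%MS -> range_sub Z T.
Proof. exact: submx_trans. Qed.

Lemma range_sub_mulmxr s t (Z : 'M[R]_(n, s)) (D : 'M[R]_(s, t)) S :
  range_sub Z S -> range_sub (Z *m D) S.
Proof. by rewrite /range_sub trmx_mul; apply: submx_trans (submxMl _ _). Qed.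

Lemma range_sub_add s (Z Z' : 'M[R]_(n, s)) S :
  range_sub Z S -> range_sub Z' S -> range_sub (Z + Z') S.
Proof. by rewrite /range_sub linearD; apply: addmx_sub. Qed.

Lemma range_sub_scale s (Z : 'M[R]_(n, s)) S a :
  range_sub Z S -> range_sub (a *: Z) S.
Proof. by rewrite /range_sub linearZ; apply: scalemx_sub. Qed.

Lemma range_sub_sub s (Z Z' : 'M[R]_(n, s)) S :
  range_sub Z S -> range_sub Z' S -> range_sub (Z - Z') S.
Proof.
by move=> hZ hZ'; rewrite -scaleN1r; apply/range_sub_add/range_sub_scale.
Qed.

End RangeSub.

Section ExtendedKrylov.
Variables (R : fieldType) (n s : nat) (M : 'M[R]_n) (G : 'M[R]_(n, s)).

Lemma EK_pow_sub j i : (i < j)%N -> range_sub (M ^+ i *m G) (EK M G j).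
Proof.
move=> lt_ij; apply: submx_trans (addsmxSl _ _).
by apply: (sumsmx_sup (Ordinal lt_ij)) => //; rewrite genmxE.
Qed.

Lemma EK_invpow_sub j i :
  (i < j)%N -> range_sub (invmx M ^+ i.+1 *m G) (EK M G j).
Proof.
move=> lt_ij; apply: submx_trans (addsmxSr _ _).
by apply: (sumsmx_sup (Ordinal lt_ij)) => //; rewrite genmxE.
Qed.

Lemma EK_subP j S :
  (forall i, (i < j)%N -> range_sub (M ^+ i *m G) S) ->
  (forall i, (i < j)%N -> range_sub (invmx M ^+ i.+1 *m G) S) ->
  (EK M G j <= S)%MS.
Proof.
move=> hpow hinv; rewrite addsmx_sub.
by apply/andP; split; apply/sumsmx_subP => i _; rewrite genmxE;
  [apply: hpow | apply: hinv].
Qed.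

Lemma EK_mono j j' : (j <= j')%N -> (EK M G j <= EK M G j')%MS.
Proof.
move=> le_jj'; apply: EK_subP => i lt_ij;
  [apply: EK_pow_sub | apply: EK_invpow_sub]; exact: leq_trans le_jj'.
Qed.

Lemma range_sub_EK_mono t (Z : 'M[R]_(n, t)) j j' :
  (j <= j')%N -> range_sub Z (EK M G j) -> range_sub Z (EK M G j').
Proof. by move=> le_jj' hZ; apply: range_sub_trans hZ (EK_mono le_jj'). Qed.

Hypothesis unitM : M \in unitmx.

(* M raises the Krylov level by one: M M^i G = M^(i+1) G and
   M M^-(i+1) G = M^-i G. *)
Lemma EK_mulmx t (Z : 'M[R]_(n, t)) j :
  range_sub Z (EK M G j) -> range_sub (M *m Z) (EK M G j.+1).
Proof.
rewrite /range_sub trmx_mul => hZ; apply: submx_trans (submxMr _ hZ) _.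
rewrite addsmxMr addsmx_sub !sumsmxMr; apply/andP; split;
  apply/sumsmx_subP => i _; rewrite (eqmxMr _ (genmxE _)) -trmx_mul mulmxA.
  by rewrite mulmxE -exprS; apply: EK_pow_sub; rewrite ltnS.
rewrite exprS mulmxA mulmxV // mul1mx.
case: i => [[|i] /= lt_ij]; last exact/EK_invpow_sub/ltnW/ltnW.
by rewrite expr0 -(expr0 M); apply: EK_pow_sub.
Qed.

Lemma EK_invmx_mulmx t (Z : 'M[R]_(n, t)) j :
  range_sub Z (EK M G j) -> range_sub (invmx M *m Z) (EK M G j.+1).
Proof.
rewrite /range_sub trmx_mul => hZ; apply: submx_trans (submxMr _ hZ) _.
rewrite addsmxMr addsmx_sub !sumsmxMr; apply/andP; split;
  apply/sumsmx_subP => i _; rewrite (eqmxMr _ (genmxE _)) -trmx_mul mulmxA;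
  last by rewrite mulmxE -exprS; apply: EK_invpow_sub; rewrite ltnS.
case: i => [[|i] /= lt_ij].
  by rewrite expr0 [_ *m 1%:M]mulmx1 -[invmx M]expr1; apply: EK_invpow_sub.
rewrite exprS mulmxA mulVmx // mul1mx; exact/EK_pow_sub/ltnW/ltnW.
Qed.

End ExtendedKrylov.

Section KrylovOfLevelRaising.
Variables (R : fieldType) (n s : nat) (A : 'M[R]_n) (G : 'M[R]_(n, s)).
Variables (N : 'M[R]_n) (b : nat).
Hypothesis raiseN : forall t (Z : 'M[R]_(n, t)) j, (b <= j)%N ->
  range_sub Z (EK A G j) -> range_sub (N *m Z) (EK A G j.+1).
Hypothesis raiseNinv : forall t (Z : 'M[R]_(n, t)) j, (b <= j)%N ->
  range_sub Z (EK A G j) -> range_sub (invmx N *m Z) (EK A G j.+1).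

Lemma EK_level_raising t (H : 'M[R]_(n, t)) m :
  range_sub H (EK A G b) -> (EK N H m <= EK A G (b + m))%MS.
Proof.
move=> hH.
have pow_level i : range_sub (N ^+ i *m H) (EK A G (b + i)).
  elim: i => [|i IH]; first by rewrite expr0 mul1mx addn0.
  by rewrite exprS -mulmxA addnS; apply: raiseN IH; rewrite leq_addr.
have invpow_level i : range_sub (invmx N ^+ i.+1 *m H) (EK A G (b + i.+1)).
  elim: i => [|i IH]; first by rewrite expr1 addn1; apply: raiseNinv.
  by rewrite exprS -mulmxA addnS; apply: raiseNinv IH; rewrite leq_addr.
apply: EK_subP => i lt_im.
  by apply: range_sub_EK_mono (pow_level i); rewrite leq_add2l ltnW.
by apply: range_sub_EK_mono (invpow_level i); rewrite leq_add2l.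
Qed.

End KrylovOfLevelRaising.

Section ShiftedOperator.
Variables (R : fieldType) (n s p : nat) (A : 'M[R]_n) (G : 'M[R]_(n, s)).
Variables (X : 'M[R]_n) (B : 'M[R]_(n, p)) (a : nat).
Hypotheses (unitA : A \in unitmx) (levelX : range_sub X (EK A G a)).

Lemma shifted_mulmx t (Z : 'M[R]_(n, t)) j : (a <= j)%N ->
  range_sub Z (EK A G j) ->
  range_sub ((A - X *m B *m B^T) *m Z) (EK A G j.+1).
Proof.
move=> le_aj hZ; rewrite mulmxBl -!mulmxA.
apply: range_sub_sub; first exact: EK_mulmx.
by apply/range_sub_mulmxr/(range_sub_EK_mono _ levelX); rewrite ltnW.
Qed.

(* If N w = Z then A w = Z + X (B B^T w), so w = A^-1 (Z + X (B B^T w)). *)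
Lemma shifted_invmx_mulmx t (Z : 'M[R]_(n, t)) j :
  A - X *m B *m B^T \in unitmx -> (a <= j)%N ->
  range_sub Z (EK A G j) ->
  range_sub (invmx (A - X *m B *m B^T) *m Z) (EK A G j.+1).
Proof.
move=> unitN le_aj hZ; set N := A - X *m B *m B^T; set w := invmx N *m Z.
have Nw : N *m w = Z by rewrite mulmxA mulmxV // mul1mx.
have Aw : A *m w = Z + X *m (B *m B^T *m w).
  by rewrite -{1}Nw mulmxBl !mulmxA subrK.
have -> : w = invmx A *m (Z + X *m (B *m B^T *m w)).
  by rewrite -Aw mulmxA mulVmx // mul1mx.
apply/EK_invmx_mulmx/range_sub_add => //.
exact/range_sub_mulmxr/(range_sub_EK_mono _ levelX).
Qed.

End ShiftedOperator.

(* Over an ordered field, a matrix K with K K^T = 0 vanishes: the diagonal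
   entries of K K^T are the sums of squares of the rows of K. *)
Lemma gram_eq0 (R : realDomainType) m t (K : 'M[R]_(m, t)) :
  K *m K^T = 0 -> K = 0.
Proof.
move=> KKt0; apply/matrixP => i j; rewrite mxE.
have := congr1 (fun M : 'M_m => M i i) KKt0; rewrite !mxE => sum_sq0.
have sq_ge0 (k : 'I_t) : true -> 0 <= K i k * K^T k i.
  by rewrite mxE -expr2 sqr_ge0.
have /(_ j isT) /eqP := psumr_eq0P sq_ge0 sum_sq0.
by rewrite mxE mulf_eq0 orbb => /eqP.
Qed.

(* Range(P P^T) = Range(P) over an ordered field; one inclusion suffices. *)
Lemma range_sub_gram (R : realFieldType) n t (P : 'M[R]_(n, t)) (S : 'M[R]_n) :
  range_sub (P *m P^T) S -> range_sub P S.
Proof.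
rewrite /range_sub => hPPt; apply: submx_trans hPPt.
set K := (P :&: kermx P^T)%MS.
have [D defK] : exists D, K = D *m P by apply/submxP; exact: capmxSl.
have KPt0 : K *m P^T = 0 by apply/sub_kermxP; exact: capmxSr.
have K0 : K = 0 by apply: gram_eq0; rewrite {2}defK trmx_mul mulmxA KPt0 mul0mx.
have rank_gram : \rank (P *m P^T) = \rank P^T.
  by have := mxrank_mul_ker P P^T; rewrite -/K K0 mxrank0 addn0 mxrank_tr.
rewrite trmx_mul trmxK.
by rewrite -(mxrank_leqif_sup (submxMl P P^T)).2 rank_gram mxrank_tr.
Qed.

Lemma iteration_step (R : fieldType) (n p q : nat)
  (A : 'M[R]_n) (B : 'M[R]_(n, p)) (C : 'M[R]_(q, n))
  (Xk Xk1 : 'M[R]_n) (lambda : R) (mk r : nat) (W : 'M[R]_(n, r))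
  (Y : 'M[R]_r) (b : nat) :
  A \in unitmx -> A - Xk *m B *m B^T \in unitmx ->
  range_eq W (EK (A - Xk *m B *m B^T) (row_mx C^T (Xk *m B)) mk) ->
  Xk1 = Xk + lambda *: (W *m Y *m W^T - Xk) ->
  (1 <= b)%N -> range_sub Xk (EK A C^T b) ->
  range_sub Xk1 (EK A C^T (b + mk)).
Proof.
move=> unitA unitN rangeW defXk1 b_gt0 levelXk.
have levelH : range_sub (row_mx C^T (Xk *m B)) (EK A C^T b).
  rewrite /range_sub tr_row_mx col_mx_sub; apply/andP; split.
    by have := EK_pow_sub A C^T b_gt0; rewrite expr0 mul1mx.
  exact: range_sub_mulmxr.
have levelW : range_sub W (EK A C^T (b + mk)).
  case/andP: rangeW => subW _; apply: range_sub_trans subW _.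
  by apply: EK_level_raising levelH => t Z j;
    [apply: shifted_mulmx | apply: shifted_invmx_mulmx].
have levelXk' : range_sub Xk (EK A C^T (b + mk)).
  by apply: range_sub_EK_mono levelXk; rewrite leq_addr.
rewrite defXk1; apply/range_sub_add/range_sub_scale/range_sub_sub => //.
by rewrite -mulmxA; apply: range_sub_mulmxr.
Qed.

Theorem corollary1 (R : realFieldType) (n p q : nat)
  (A : 'M[R]_n) (B : 'M[R]_(n, p)) (C : 'M[R]_(q, n))
  (X : nat -> 'M[R]_n) (lambda : nat -> R)
  (m r : nat -> nat) (W : forall k, 'M[R]_(n, r k)) (Y : forall k, 'M[R]_(r k)) :
  A \in unitmx ->
  X 0%N = 0 ->
  (forall k, A - X k *m B *m B^T \in unitmx) ->
  (forall k, orthonormal_cols (W k.+1)) ->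
  (forall k, range_eq (W k.+1)
     (EK (A - X k *m B *m B^T) (row_mx C^T (X k *m B)) (m k.+1))) ->
  (forall k, 0 < lambda k) ->
  (forall k, X k.+1 =
     X k + lambda k *: (W k.+1 *m Y k.+1 *m (W k.+1)^T - X k)) ->
  forall k : nat, exists mbar : nat,
    (mbar <= \sum_(1 <= j < k.+2) m j + 2)%N /\
    range_sub (X k.+1) (EK A C^T mbar) /\
    (forall (t : nat) (P : 'M[R]_(n, t)),
       X k.+1 = P *m P^T -> range_sub P (EK A C^T mbar)).
Proof.
move=> unitA X0 unitN _ rangeW _ defX.
pose level k := (1 + \sum_(1 <= j < k.+1) m j)%N.
have step k b : (1 <= b)%N -> range_sub (X k) (EK A C^T b) ->
    range_sub (X k.+1) (EK A C^T (b + m k.+1)).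
  exact: iteration_step (unitN k) (rangeW k) (defX k).
have levelX k : range_sub (X k) (EK A C^T (level k)).
  elim: k => [|k IH]; first by rewrite X0 /range_sub trmx0 sub0mx.
  by rewrite /level big_nat_recr //= addnA; apply: step.
move=> k; exists (level k.+1); split; first by rewrite addnC leq_add2l.
split=> [|t P defP]; first exact: levelX.
by apply: range_sub_gram; rewrite -defP; apply: levelX.
Qed.
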